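(* Let $\Re$ be a commutative Krasner hyperring with identity $1\ne0$, and let $\phi:L(\Re)\to L(\Re)\cup\{\emptyset\}$ be a function with $\phi\le\phi_3$. If $T$ is a proper $\phi$-prime hyperideal of $\Re$, then $T$ is a $w$-prime hyperideal.
   Context: Krasner hyperring: $(\Re,\oplus)$ canonical hypergroup, $(\Re,\circ)$ commutative semigroup with identity $1\ne0$, $0$ absorbing, distributive. Hyperideals and $L(\Re)$ as usual; $N^n$ is the $n$-th power of the hyperideal $N$ (product hyperideal generated by products). $\phi_3(N)=N^3$, $\phi_w(N)=\bigcap_{n\ge1}N^n$. For functions $\sigma_1,\sigma_2:L(\Re)\to L(\Re)\cup\{\emptyset\}$, $\sigma_1\le\sigma_2$ means $\sigma_1(N)\subseteq\sigma_2(N)$ for all $N$. A hyperideal $N$ is $\sigma$-prime if $a\circ b\in N$, $a\circ b\notin\sigma(N)$ imply $a\in N$ or $b\in N$; $w$-prime means $\phi_w$-prime. *)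

Definition hset (R : Type) := R -> Prop.
Definition hsubset {R : Type} (A B : hset R) : Prop := forall x, A x -> B x.

Record KrasnerHyperring := {
  carrier :> Type;
  hadd : carrier -> carrier -> hset carrier;
  hneg : carrier -> carrier;
  hzero : carrier;
  hmul : carrier -> carrier -> carrier;
  hone : carrier;
  (* (R, ⊕) is a canonical hypergroup *)
  hadd_nonempty : forall x y, exists z, hadd x y z;
  hadd_assoc : forall x y z w,
      (exists u, hadd x y u /\ hadd u z w) <-> (exists v, hadd y z v /\ hadd x v w);
  hadd_comm : forall x y w, hadd x y w <-> hadd y x w;
  hadd_zero : forall x w, hadd x hzero w <-> w = x;
  hneg_spec : forall x, hadd x (hneg x) hzero;
  hneg_unique : forall x y, hadd x y hzero -> y = hneg x;
  hadd_reversible : forall x y z, hadd x y z -> hadd (hneg x) z y;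
  hmul_assoc : forall x y z, hmul x (hmul y z) = hmul (hmul x y) z;
  hmul_comm : forall x y, hmul x y = hmul y x;
  hmul_one : forall x, hmul hone x = x;
  hone_neq_zero : hone <> hzero;
  hmul_zero : forall x, hmul hzero x = hzero;
  (* distributivity: a ∘ (x ⊕ y) = (a ∘ x) ⊕ (a ∘ y) *)
  hmul_distr : forall a x y w,
      (exists u, hadd x y u /\ w = hmul a u) <-> hadd (hmul a x) (hmul a y) w
}.

Arguments hadd {k}.
Arguments hneg {k}.
Arguments hzero {k}.
Arguments hmul {k}.
Arguments hone {k}.

Section Hyperideals.
Variable R : KrasnerHyperring.

Definition hyperideal (N : hset R) : Prop :=
  (exists x, N x) /\
  (forall a b, N a -> N b -> hsubset (hadd a (hneg b)) N) /\
  (forall r a, N a -> N (hmul r a)).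

Definition proper (N : hset R) : Prop := exists x, ~ N x.

Definition hideal_gen (S : hset R) : hset R :=
  fun x => forall J, hyperideal J -> hsubset S J -> J x.

Definition hprod (I J : hset R) : hset R :=
  hideal_gen (fun x => exists a b, I a /\ J b /\ x = hmul a b).

(** hpow_aux N m = N^(m+1) *)
Fixpoint hpow_aux (N : hset R) (m : nat) : hset R :=
  match m with
  | O => N
  | S m' => hprod (hpow_aux N m') N
  end.

(** N^n (for n >= 1; N^0 is the whole hyperring by convention). *)
Definition hpow (N : hset R) (n : nat) : hset R :=
  match n with
  | O => fun _ => True
  | S m => hpow_aux N m
  end.

Definition phi3 (N : hset R) : hset R := hpow N 3.
Definition phiw (N : hset R) : hset R := fun x => forall n, 1 <= n -> hpow N n x.

(** sigma : L(R) -> L(R) ∪ {∅}, modelled on all subsets, constrained on hyperideals. *)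
Definition hfun_ok (sigma : hset R -> hset R) : Prop :=
  forall N, hyperideal N -> hyperideal (sigma N) \/ (forall x, ~ sigma N x).

Definition hfun_le (s1 s2 : hset R -> hset R) : Prop :=
  forall N, hyperideal N -> hsubset (s1 N) (s2 N).

Definition sigma_prime (sigma : hset R -> hset R) (N : hset R) : Prop :=
  hyperideal N /\
  forall a b, N (hmul a b) -> ~ sigma N (hmul a b) -> N a \/ N b.

Definition w_prime (N : hset R) : Prop := sigma_prime phiw N.

End Hyperideals.

(* If a ∘ b ∈ φ(T) with a, b ∉ T, the twin-zero argument for weakly prime
   ideals gives T² ⊆ φ(T) ⊆ T³.  Then every power T^n with n ≥ 2 equals T²,
   so a ∘ b ∈ T³ = T² lies in every power of T, that is in φ_w(T). *)

From Stdlib Require Import Classical.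

Section Hyperideals.
Variable R : KrasnerHyperring.

Lemma hneg_involutive (x : R) : hneg (hneg x) = x.
Proof. symmetry; apply hneg_unique, hadd_comm, hneg_spec. Qed.

Lemma hmul_hadd (c x y w : R) :
  hadd x y w -> hadd (hmul c x) (hmul c y) (hmul c w).
Proof. intros Hw; apply hmul_distr; exists w; auto. Qed.

Section OneHyperideal.
Variable J : hset R.
Hypothesis HJ : hyperideal R J.

Lemma hyperideal_zero : J hzero.
Proof.
  destruct HJ as [[x Hx] [Hsub _]].
  exact (Hsub x x Hx Hx _ (hneg_spec R x)).
Qed.

Lemma hyperideal_mul (r x : R) : J x -> J (hmul r x).
Proof. apply HJ. Qed.

Lemma hyperideal_neg (x : R) : J x -> J (hneg x).
Proof.
  intros Hx; destruct HJ as [_ [Hsub _]].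
  apply (Hsub hzero x hyperideal_zero Hx).
  apply hadd_comm, hadd_zero; reflexivity.
Qed.

Lemma hyperideal_add (x y z : R) : J x -> J y -> hadd x y z -> J z.
Proof.
  intros Hx Hy Hz; destruct HJ as [_ [Hsub _]].
  apply (Hsub x (hneg y) Hx (hyperideal_neg y Hy)).
  rewrite hneg_involutive; exact Hz.
Qed.

Lemma hyperideal_add_cancel (x y z : R) : J x -> J z -> hadd x y z -> J y.
Proof.
  intros Hx Hz Hxyz.
  exact (hyperideal_add (hneg x) z y (hyperideal_neg x Hx) Hz
           (hadd_reversible R x y z Hxyz)).
Qed.

Lemma hyperideal_add_notin (a x u : R) : ~ J a -> J x -> hadd a x u -> ~ J u.
Proof.
  intros Ha Hx Hu Ju; apply Ha.
  apply (hyperideal_add_cancel x a u Hx Ju), hadd_comm, Hu.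
Qed.

End OneHyperideal.

Lemma hideal_gen_min (S J : hset R) :
  hyperideal R J -> hsubset S J -> hsubset (hideal_gen R S) J.
Proof. intros HJ HS x Hx; exact (Hx J HJ HS). Qed.

Lemma hideal_gen_hyperideal (S : hset R) : hyperideal R (hideal_gen R S).
Proof.
  split; [| split].
  - exists hzero; intros J HJ _; exact (hyperideal_zero J HJ).
  - intros a b Ha Hb z Hz J HJ HS.
    exact (proj1 (proj2 HJ) a b (Ha J HJ HS) (Hb J HJ HS) z Hz).
  - intros r a Ha J HJ HS; exact (hyperideal_mul J HJ r a (Ha J HJ HS)).
Qed.

Lemma hideal_gen_mono (S S' : hset R) :
  hsubset S S' -> hsubset (hideal_gen R S) (hideal_gen R S').
Proof. intros HS x Hx J HJ HS'; apply Hx; auto; intros y Hy; auto. Qed.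

Lemma hprod_monol (I I' J : hset R) :
  hsubset I I' -> hsubset (hprod R I J) (hprod R I' J).
Proof.
  intros HI; apply hideal_gen_mono.
  intros x [a [b [Ha [Hb Hx]]]]; exists a, b; auto.
Qed.

Lemma hprod_subr (I J : hset R) : hyperideal R I -> hsubset (hprod R I J) I.
Proof.
  intros HI; apply hideal_gen_min; auto.
  intros x [a [b [Ha [_ ->]]]]; rewrite hmul_comm; exact (hyperideal_mul I HI b a Ha).
Qed.

Lemma hpow_aux_hyperideal (N : hset R) (m : nat) :
  hyperideal R N -> hyperideal R (hpow_aux R N m).
Proof. intros HN; destruct m; [exact HN | apply hideal_gen_hyperideal]. Qed.

Lemma hpow_aux_stable (N : hset R) :
  hsubset (hpow_aux R N 1) (hpow_aux R N 2) ->
  forall m, hsubset (hpow_aux R N 1) (hpow_aux R N (S m)).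
Proof.
  intros H12 m; induction m as [| m IH]; [intros x Hx; exact Hx |].
  intros x Hx; exact (hprod_monol _ _ N IH x (H12 x Hx)).
Qed.

Lemma phiw_of_pow_stable (N : hset R) (x : R) :
  hyperideal R N -> hsubset (hpow R N 2) (hpow R N 3) ->
  N x -> hpow R N 3 x -> phiw R N x.
Proof.
  intros HN H23 Nx N3x [| [| m]] Hn; [inversion Hn | exact Nx |].
  apply (hpow_aux_stable N H23 m).
  exact (hprod_subr _ N (hpow_aux_hyperideal N 1 HN) x N3x).
Qed.

(* The twin-zero argument: [I] is prime outside [P], and [a ∘ b ∈ I ∩ P]
   with [a, b ∉ I]. *)
Section TwinZero.
Variables I P : hset R.
Hypothesis HI : hyperideal R I.
Hypothesis HP : hyperideal R P.
Hypothesis Hprime : forall a b, I (hmul a b) -> ~ P (hmul a b) -> I a \/ I b.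

Lemma twin_zero_mul_sub (a b : R) :
  ~ I a -> ~ I b -> I (hmul a b) -> P (hmul a b) ->
  forall x, I x -> P (hmul a x).
Proof.
  intros Ha Hb Iab Pab x Ix.
  destruct (hadd_nonempty R b x) as [y Hy].
  pose proof (hmul_hadd a b x y Hy) as Hay.
  assert (Iay : I (hmul a y))
    by exact (hyperideal_add I HI _ _ _ Iab (hyperideal_mul I HI a x Ix) Hay).
  assert (Pay : P (hmul a y)).
  { apply NNPP; intros nPay.
    destruct (Hprime a y Iay nPay) as [Ia | Iy]; [contradiction |].
    exact (hyperideal_add_notin I HI b x y Hb Ix Hy Iy). }
  exact (hyperideal_add_cancel P HP _ _ _ Pab Pay Hay).
Qed.

Lemma twin_zero_hprod_sub (a b : R) :
  ~ I a -> ~ I b -> I (hmul a b) -> P (hmul a b) -> hsubset (hprod R I I) P.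
Proof.
  intros Ha Hb Iab Pab; apply hideal_gen_min; auto.
  intros z [x [y [Ix [Iy ->]]]].
  destruct (hadd_nonempty R a x) as [u Hu].
  pose proof (hmul_hadd b a x u Hu) as Hbu.
  rewrite (hmul_comm R b a) in Hbu.
  assert (Pbx : P (hmul b x)).
  { apply (twin_zero_mul_sub b a); rewrite ?(hmul_comm R b a); auto. }
  assert (Iub : I (hmul u b)).
  { rewrite hmul_comm.
    exact (hyperideal_add I HI _ _ _ Iab (hyperideal_mul I HI b x Ix) Hbu). }
  assert (Pub : P (hmul u b)).
  { rewrite hmul_comm; exact (hyperideal_add P HP _ _ _ Pab Pbx Hbu). }
  pose proof (hyperideal_add_notin I HI a x u Ha Ix Hu) as Hun.
  assert (Puy : P (hmul u y)) by exact (twin_zero_mul_sub u b Hun Hb Iub Pub y Iy).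
  assert (Pay : P (hmul a y)) by exact (twin_zero_mul_sub a b Ha Hb Iab Pab y Iy).
  pose proof (hmul_hadd y a x u Hu) as Hyu.
  rewrite hmul_comm; rewrite (hmul_comm R y a), (hmul_comm R y u) in Hyu.
  exact (hyperideal_add_cancel P HP _ _ _ Pay Puy Hyu).
Qed.

End TwinZero.

End Hyperideals.

Theorem mainTheorem7 (R : KrasnerHyperring) (phi : hset R -> hset R)
  (Hphi : hfun_ok R phi) (Hle : hfun_le R phi (phi3 R))
  (T : hset R) (HT : proper R T) (Hprime : sigma_prime R phi T) :
  w_prime R T.
Proof.
  destruct Hprime as [HTid Hpr]; split; [exact HTid |].
  intros a b Tab nWab.
  destruct (classic (phi T (hmul a b))) as [Pab | nPab]; [| exact (Hpr a b Tab nPab)].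
  destruct (classic (T a)) as [Ta | Ha]; [now left |].
  destruct (classic (T b)) as [Tb | Hb]; [now right |].
  exfalso; apply nWab.
  assert (Hphi_id : hyperideal R (phi T)).
  { destruct (Hphi T HTid) as [Hid | Hempty]; [exact Hid | contradiction (Hempty _ Pab)]. }
  assert (T2_sub_T3 : hsubset (hpow R T 2) (hpow R T 3)).
  { intros x Hx; apply (Hle T HTid).
    exact (twin_zero_hprod_sub R T (phi T) HTid Hphi_id Hpr a b Ha Hb Tab Pab x Hx). }
  exact (phiw_of_pow_stable R T _ HTid T2_sub_T3 Tab (Hle T HTid _ Pab)).
Qed.
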